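(* Let $\mathbb{F}$ be a field, $\sigma=\mathrm{Id}$, and $\delta$ a derivation of $\mathbb{F}$ with field of constants $K=\{\beta\in\mathbb{F}:\delta(\beta)=0\}$, and assume $\dim_K(\mathbb{F})<\infty$. A vector $(a_1,\dots,a_r)\in\mathbb{F}^r$ is a $(\sigma,\delta)$-multiplicity sequence if and only if for each $i=1,\dots,r-1$ there exists $\beta_i\in\mathbb{F}^*$ with $$a_{i+1}-a_i=\delta(\beta_i)\beta_i^{-1}\quad\text{and}\quad\beta_i\notin\delta(\mathbb{F}).$$
   Context: $\mathbb{F}[x;\mathrm{Id},\delta]$ is the differential polynomial ring with $xa=ax+\delta(a)$. For $\mathbf a=(a_1,\dots,a_r)$, $P_{\mathbf a}=(x-a_r)\cdots(x-a_1)$; $\mathbf a$ is a $(\sigma,\delta)$-multiplicity sequence if $a_1$ is the only $b\in\mathbb{F}$ such that $x-b$ divides $P_{\mathbf a}$ on the right. *)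

From HB Require Import structures.
From mathcomp Require Import all_boot all_order all_algebra.
Set Implicit Arguments. Unset Strict Implicit. Unset Printing Implicit Defensive.
Import GRing.Theory.
Local Open Scope ring_scope.

(* Differential polynomial ring F[x; Id, delta], xa = ax + delta(a).
   Elements are represented by {poly F}, read as sum_i p_i x^i with
   coefficients on the LEFT.  Only the multiplication differs. *)

Definition is_derivation (F : fieldType) (d : F -> F) : Prop :=
  (forall a b, d (a + b) = d a + d b) /\ (forall a b, d (a * b) = a * d b + d a * b).

(* left multiplication by x:  x * (sum q_j x^j) = sum (q_j x + d q_j) x^j *)
Definition xmul (F : fieldType) (d : F -> F) (q : {poly F}) : {poly F} :=
  'X * q + map_poly d q.

Definition skmul (F : fieldType) (d : F -> F) (p q : {poly F}) : {poly F} :=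
  \sum_(i < size p) p`_i *: iter i (xmul d) q.

(* P_a = (x - a_r) ... (x - a_1), for a = [:: a_1; ...; a_r] *)
Definition Pseq (F : fieldType) (d : F -> F) (a : seq F) : {poly F} :=
  foldl (fun P b => skmul d ('X - b%:P) P) 1 a.

Definition rdivides (F : fieldType) (d : F -> F) (P : {poly F}) (b : F) : Prop :=
  exists Q : {poly F}, P = skmul d Q ('X - b%:P).

Definition multiplicity_seq (F : fieldType) (d : F -> F) (a : seq F) : Prop :=
  forall b : F, rdivides d (Pseq d a) b <-> b = a`_0.

Definition findim_over_constants (F : fieldType) (d : F -> F) : Prop :=
  exists (n : nat) (e : 'I_n -> F),
    forall y : F, exists c : 'I_n -> F,
      (forall i, d (c i) = 0) /\ y = \sum_(i < n) c i * e i.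

(* For a in F, F is a left F[x; Id, d]-module F_a in which x acts by
   c |-> a c + d c.  Evaluating on 1 in F_b gives a remainder theorem:
   x - b right-divides P iff P kills 1 in F_b; so a is a multiplicity
   sequence iff a_1 is the only b for which P_a = (x - a_r) ... (x - a_1)
   kills 1 in F_b.  On F_a, P_s is K-linear; multiplication by u
   intertwines F_(a + du/u) with F_a (d-conjugacy), and x - (a + du/u) acts
   on F_a as u o d o u^-1.
   - Sufficiency: by induction, if the gaps are admissible then P_a acting
     on F_(a_1) has kernel K and image inside u d(F) for some u; a root b
     conjugate to a_1 then equals a_1, and a non-conjugate b makes P_a
     injective on F_b, which is impossible.
   - Necessity (uses finite dimension): an injective K-linear endomorphism
     of F is onto, and two K-linear maps with equal kernels and nested
     images have equal images (rank-nullity in the K-vector space F); these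
     show that the last gap is d-conjugate to 0 and its witness is not a
     derivative. *)
From HB Require Import structures.
From mathcomp Require Import all_boot all_order all_algebra.
From mathcomp Require Import ring.
From Stdlib Require Import Classical ClassicalEpsilon.
Set Implicit Arguments. Unset Strict Implicit. Unset Printing Implicit Defensive.
Import GRing.Theory.
Local Open Scope ring_scope.

Ltac field_nz :=
  field; rewrite ?oner_neq0 ?andbT ?andTb; try done;
  repeat (apply/andP; split); try done.

Section Derivation.
Variables (F : fieldType) (d : F -> F).
Hypothesis Hd : is_derivation d.

Lemma derD a b : d (a + b) = d a + d b. Proof. exact: (proj1 Hd). Qed.
Lemma derM a b : d (a * b) = a * d b + d a * b. Proof. exact: (proj2 Hd). Qed.

Lemma der0 : d 0 = 0.
Proof. by apply: (addrI (d 0)); rewrite -derD !addr0. Qed.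

Lemma der1 : d 1 = 0.
Proof.
have := derM 1 1; rewrite !mul1r mulr1 => H.
by apply: (addrI (d 1)); rewrite addr0 -H.
Qed.

Lemma derN a : d (- a) = - d a.
Proof. by apply: (addrI (d a)); rewrite -derD !subrr der0. Qed.

Lemma derB a b : d (a - b) = d a - d b. Proof. by rewrite derD derN. Qed.

Lemma derV a : a != 0 -> d a^-1 = - (d a / (a * a)).
Proof.
move=> a0; have := derM a a^-1; rewrite divff // der1 => /esym /eqP.
rewrite addr_eq0 => /eqP H.
by apply: (mulfI a0); rewrite H; field_nz.
Qed.

Lemma derMc k a : d k = 0 -> d (k * a) = k * d a.
Proof. by move=> dk; rewrite derM dk mul0r addr0. Qed.

Lemma derVc k : d k = 0 -> d k^-1 = 0.
Proof.
move=> dk; have [->|k0] := eqVneq k 0; first by rewrite invr0 der0.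
by rewrite derV // dk mul0r oppr0.
Qed.

End Derivation.

Section ModuleAction.
Variables (F : fieldType) (d : F -> F).
Hypothesis Hd : is_derivation d.

(* For a in F, F is a left F[x; Id, d]-module F_a (isomorphic to
   F[x; Id, d] / F[x; Id, d] (x - a)): field elements act by left
   multiplication and x acts by c |-> a c + d c. *)
Definition xact (a c : F) : F := a * c + d c.

Definition pact (a : F) (P : {poly F}) (c : F) : F :=
  \sum_(i < size P) P`_i * iter i (xact a) c.

Lemma xactD a x y : xact a (x + y) = xact a x + xact a y.
Proof. by rewrite /xact (derD Hd) mulrDr; ring. Qed.

Lemma xact0 a : xact a 0 = 0.
Proof. by rewrite /xact (der0 Hd) mulr0 addr0. Qed.

Lemma xactM a u v : xact a (u * v) = u * xact a v + d u * v.
Proof. by rewrite /xact (derM Hd); ring. Qed.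

Lemma xact_sum a n (f : 'I_n -> F) : xact a (\sum_i f i) = \sum_i xact a (f i).
Proof. exact: (big_morph (xact a) (xactD a) (xact0 a)). Qed.

Lemma iter_xact0 a i : iter i (xact a) 0 = 0.
Proof. by elim: i => //= i ->; rewrite xact0. Qed.

Lemma pact_widen a n (P : {poly F}) c : (size P <= n)%N ->
  pact a P c = \sum_(i < n) P`_i * iter i (xact a) c.
Proof.
move=> Hn; rewrite /pact (big_ord_widen n (fun i => P`_i * iter i (xact a) c)) //.
rewrite big_mkcond; apply: eq_bigr => i _; case: ifP => // /negbT.
by rewrite -leqNgt => H; rewrite nth_default // mul0r.
Qed.

Lemma pactD a P Q c : pact a (P + Q) c = pact a P c + pact a Q c.
Proof.
pose n := maxn (size P) (size Q).
rewrite !(@pact_widen a n) ?leq_maxl ?leq_maxr //; last first.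
  by apply: leq_trans (size_add _ _) _.
by rewrite -big_split; apply: eq_bigr => i _; rewrite coefD mulrDl.
Qed.

Lemma pact0 a c : pact a 0 c = 0.
Proof. by rewrite /pact size_poly0 big_ord0. Qed.

Lemma pact_sum a n (f : 'I_n -> {poly F}) c :
  pact a (\sum_i f i) c = \sum_i pact a (f i) c.
Proof.
exact: (big_morph (fun P => pact a P c) (fun P Q => pactD a P Q c) (pact0 a c)).
Qed.

Lemma pactZ a k P c : pact a (k *: P) c = k * pact a P c.
Proof.
rewrite (@pact_widen a (size P)) ?size_scale_leq // /pact mulr_sumr.
by apply: eq_bigr => i _; rewrite coefZ mulrA.
Qed.

Lemma pact1 a c : pact a 1 c = c.
Proof. by rewrite /pact size_poly1 big_ord1 coefC /= mul1r. Qed.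

Lemma pactC a r c : pact a r%:P c = r * c.
Proof. by rewrite (@pact_widen a 1) ?size_polyC_leq1 // big_ord1 coefC. Qed.

Lemma pact_XsubC a e c : pact a ('X - e%:P) c = xact a c - e * c.
Proof.
rewrite (@pact_widen a 2) ?size_XsubC // !big_ord_recl big_ord0 /=.
by rewrite !coefB !coefX !coefC /=; ring.
Qed.

Lemma pact_xmul a q c : pact a (xmul d q) c = xact a (pact a q c).
Proof.
rewrite /xmul pactD (@pact_widen a (size q).+1); last first.
  by apply: leq_trans (size_mul_leq _ _) _; rewrite size_polyX; case: (size q).
rewrite big_ord_recl coefXM /= mul0r add0r.
rewrite (@pact_widen a (size q)); last exact: size_poly.
rewrite /pact xact_sum -big_split /=; apply: eq_bigr => i _.
by rewrite coefXM /= coef_map_id0 ?(der0 Hd) // xactM.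
Qed.

Lemma pact_skmul a P Q c : pact a (skmul d P Q) c = pact a P (pact a Q c).
Proof.
have iterE i q : pact a (iter i (xmul d) q) c = iter i (xact a) (pact a q c).
  by elim: i => //= i <-; rewrite pact_xmul.
rewrite /skmul pact_sum [RHS]/pact; apply: eq_bigr => i _.
by rewrite pactZ iterE.
Qed.

Lemma skmul_widen n (P Q : {poly F}) : (size P <= n)%N ->
  skmul d P Q = \sum_(i < n) P`_i *: iter i (xmul d) Q.
Proof.
move=> Hn; rewrite /skmul (big_ord_widen n (fun i => P`_i *: iter i (xmul d) Q)) //.
rewrite big_mkcond; apply: eq_bigr => i _; case: ifP => // /negbT.
by rewrite -leqNgt => H; rewrite nth_default // scale0r.
Qed.

Lemma skmulDl P1 P2 Q : skmul d (P1 + P2) Q = skmul d P1 Q + skmul d P2 Q.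
Proof.
pose n := maxn (size P1) (size P2).
rewrite !(@skmul_widen n) ?leq_maxl ?leq_maxr //; last first.
  by apply: leq_trans (size_add _ _) _.
by rewrite -big_split; apply: eq_bigr => i _; rewrite coefD scalerDl.
Qed.

Lemma skmul_monomial k c Q : skmul d (c *: 'X^k) Q = c *: iter k (xmul d) Q.
Proof.
rewrite (@skmul_widen k.+1); last first.
  by apply: leq_trans (size_scale_leq _ _) _; rewrite size_polyXn.
rewrite big_ord_recr /= big1 ?add0r; first by rewrite coefZ coefXn eqxx mulr1.
by move=> i _; rewrite coefZ coefXn /= (ltn_eqF (ltn_ord i)) mulr0 scale0r.
Qed.

Lemma skmul0 Q : skmul d 0 Q = 0.
Proof. by rewrite /skmul size_poly0 big_ord0. Qed.

Lemma xpow_XsubC (b : F) k :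
  (size (iter k (xmul d) ('X - b%:P)%R) <= k.+2)%N /\
  (iter k (xmul d) ('X - b%:P))`_k.+1 = 1.
Proof.
elim: k => [|k [Hsize Hlead]] /=.
  by rewrite size_XsubC coefB coefX coefC /= subr0.
set q := iter k (xmul d) ('X - b%:P) in Hsize Hlead *.
have Hdq : (size (map_poly d q) <= k.+2)%N by apply: leq_trans Hsize; exact: size_poly.
split.
  apply: leq_trans (size_add _ _) _; rewrite geq_max; apply/andP; split.
    by apply: leq_trans (size_mul_leq _ _) _; rewrite size_polyX.
  exact: leq_trans Hdq _.
rewrite coefD coefXM /= Hlead coef_map_id0 ?(der0 Hd) //.
by rewrite (leq_sizeP _ _ Hsize) // (der0 Hd) addr0.
Qed.

Lemma skmul_divXsubC b P : exists Q r, P = skmul d Q ('X - b%:P) + r%:P.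
Proof.
elim: {P}(size P) {-2}P (leqnn (size P)) => [|n IH] P Hs.
  exists 0, 0; rewrite skmul0 add0r; apply/eqP.
  by rewrite -size_poly_eq0 -leqn0.
case: n IH Hs => [|n] IH Hs.
  by exists 0, P`_0; rewrite skmul0 add0r [LHS]size1_polyC.
have [Ss Sc] := xpow_XsubC b n.
set R := iter n (xmul d) ('X - b%:P) in Ss Sc.
have : (size (P - P`_n.+1 *: R)%R <= n.+1)%N.
  apply/leq_sizeP => j Hj; rewrite coefB coefZ.
  case: (ltngtP j n.+1) => [|Hj2|->]; first by rewrite ltnNge Hj.
    by rewrite (leq_sizeP _ _ Hs j Hj2) (leq_sizeP _ _ Ss j Hj2) mulr0 subr0.
  by rewrite Sc mulr1 subrr.
case/IH => Q [r Hr]; exists (Q + P`_n.+1 *: 'X^n), r.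
by rewrite skmulDl skmul_monomial -/R -addrA (addrC (_ *: R)) addrA -Hr subrK.
Qed.

Lemma rdividesE P b : rdivides d P b <-> pact b P 1 = 0.
Proof.
have killed Q : pact b (skmul d Q ('X - b%:P)) 1 = 0.
  rewrite pact_skmul pact_XsubC /xact (der1 Hd) addr0 mulr1 subrr.
  by rewrite /pact big1 // => i _; rewrite iter_xact0 mulr0.
split; first by case=> Q ->.
have [Q [r ->]] := skmul_divXsubC b P.
rewrite pactD killed add0r pactC mulr1 => ->.
by exists Q; rewrite addr0.
Qed.

Definition xsub_act (a e c : F) : F := xact a c - e * c.

Definition seq_act (a : F) (s : seq F) (c : F) : F :=
  foldl (fun c e => xsub_act a e c) c s.

Lemma pact_Pseq a s c : pact a (Pseq d s) c = seq_act a s c.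
Proof.
rewrite /Pseq /seq_act -[in RHS](pact1 a c).
elim: s (1 : {poly F}) => //= e s IH P.
by rewrite IH pact_skmul pact_XsubC.
Qed.

Lemma rdivides_Pseq s b : rdivides d (Pseq d s) b <-> seq_act b s 1 = 0.
Proof. by rewrite rdividesE pact_Pseq. Qed.

End ModuleAction.

Section ConstantBasis.
Variables (F : fieldType) (d : F -> F).
Hypothesis Hd : is_derivation d.

Definition const_free m (e : 'I_m -> F) : Prop :=
  forall c : 'I_m -> F, (forall i, d (c i) = 0) ->
    \sum_i c i * e i = 0 -> forall i, c i = 0.

Definition const_span m (e : 'I_m -> F) : Prop :=
  forall y : F, exists c : 'I_m -> F,
    (forall i, d (c i) = 0) /\ y = \sum_i c i * e i.

Lemma const_basis n (e : 'I_n -> F) : const_span e ->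
  exists m (e' : 'I_m -> F), const_free e' /\ const_span e'.
Proof.
elim: n e => [|n IH] e Hs; first by exists 0%N, e; split => // c _ _ [].
have [Hf|Hf] := classic (const_free e); first by exists n.+1, e.
have [c [Hc [Hsum [j cj0]]]] : exists c : 'I_n.+1 -> F, (forall i, d (c i) = 0) /\
    \sum_i c i * e i = 0 /\ exists j, c j != 0.
  apply: NNPP => H; apply: Hf => c Hc Hs0 i; apply: NNPP => Hi.
  by apply: H; exists c; split => //; split => //; exists i; apply/eqP.
have ej : e j = - (c j)^-1 * \sum_(i < n) c (lift j i) * e (lift j i).
  move: Hsum; rewrite (bigD1_ord j) //= => /eqP; rewrite addr_eq0 => /eqP H.
  by apply: (mulfI cj0); rewrite H mulNr mulrN mulrA divff // mul1r.
apply: (IH (fun i => e (lift j i))) => y; have [c' [Hc' ->]] := Hs y.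
exists (fun i => c' (lift j i) - c' j / c j * c (lift j i)); split.
  move=> i; rewrite (derB Hd) !(derM Hd) (derVc Hd (Hc j)) !Hc !Hc'.
  by rewrite !(mulr0, mul0r, addr0) subrr.
rewrite (bigD1_ord j) //= ej mulrA mulr_sumr addrC -big_split /=.
by apply: eq_bigr => i _; ring.
Qed.

End ConstantBasis.

Section FiniteDimension.
Variables (F : fieldType) (d : F -> F).
Hypothesis Hd : is_derivation d.
Hypothesis Hfin : findim_over_constants d.

Definition const_linear (f : F -> F) : Prop :=
  (forall x y, f (x + y) = f x + f y) /\
  (forall k x, d k = 0 -> f (k * x) = k * f x).

(* The field K of constants, as a subfield of F.  The predicate is indexed by
   the derivation hypothesis, which the canonical closure instance needs. *)
Definition constants (_ : is_derivation d) : pred F := [pred x | d x == 0].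

Lemma constants_divring_closed : divring_closed (constants Hd).
Proof.
split; first by rewrite inE (der1 Hd).
  by move=> x y; rewrite !inE (derB Hd) => /eqP -> /eqP ->; rewrite subrr.
move=> x y; rewrite !inE => /eqP dx /eqP dy.
by rewrite (derM Hd) (derVc Hd dy) dx mulr0 mul0r addr0.
Qed.

HB.instance Definition _ :=
  GRing.isDivringClosed.Build F (constants Hd) constants_divring_closed.

Record Kt := MkK { kval :> F; kvalP : kval \in constants Hd }.
HB.instance Definition _ := [isSub for kval].
HB.instance Definition _ := [Choice of Kt by <:].
HB.instance Definition _ := [SubChoice_isSubIntegralDomain of Kt by <:].
HB.instance Definition _ := [SubIntegralDomain_isSubField of Kt by <:].

Lemma der_kval (k : Kt) : d (kval k) = 0.
Proof. exact/eqP/(kvalP k). Qed.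

(* F viewed as a K-vector space; indexed by the finiteness hypothesis, which
   provides its dimension. *)
Definition FK (_ : findim_over_constants d) : Type := F.
Local Notation V := (FK Hfin).
HB.instance Definition _ := GRing.Zmodule.on V.

Definition scaleK (k : Kt) (x : V) : V := (kval k : F) * x.
Lemma scaleKA a b v : scaleK a (scaleK b v) = scaleK (a * b) v.
Proof. by rewrite /scaleK mulrA. Qed.
Lemma scaleK1 : left_id 1 scaleK. Proof. by move=> x; rewrite /scaleK mul1r. Qed.
Lemma scaleKDr : right_distributive scaleK +%R.
Proof. by move=> ? ? ?; rewrite /scaleK mulrDr. Qed.
Lemma scaleKDl v : {morph scaleK^~ v : a b / a + b}.
Proof. by move=> ? ?; rewrite /scaleK /= mulrDl. Qed.
HB.instance Definition _ :=
  GRing.Zmodule_isLmodule.Build Kt V scaleKA scaleK1 scaleKDr scaleKDl.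

Let basis_sig := constructive_indefinite_description _
  (let: ex_intro n (ex_intro e He) := Hfin in const_basis Hd He).
Let dimK : nat := sval basis_sig.
Let vec_sig := constructive_indefinite_description _ (svalP basis_sig).
Let eK : 'I_dimK -> F := sval vec_sig.

Definition r2v (r : 'rV[Kt]_dimK) : V := \sum_i kval (r 0 i) * eK i.

Lemma r2v_lin : linear r2v.
Proof.
move=> a r s; rewrite /r2v [in RHS]/GRing.scale /= /scaleK mulr_sumr -big_split /=.
by apply: eq_bigr => i _; rewrite !mxE /= mulrDl mulrA.
Qed.

Lemma r2v_inj : injective r2v.
Proof.
move=> r s H; apply/rowP => i; apply: val_inj; apply/eqP; rewrite -subr_eq0.
apply/eqP; move: i; apply: (proj1 (svalP vec_sig) (fun i => kval (r 0 i) - kval (s 0 i))).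
  by move=> j; rewrite (derB Hd) !der_kval subrr.
by rewrite /r2v in H; under eq_bigr do rewrite mulrBl; rewrite sumrB H subrr.
Qed.

Lemma r2v_surj (y : V) : exists r, r2v r = y.
Proof.
have [c [Hc ->]] := proj2 (svalP vec_sig) y.
have Pc i : c i \in constants Hd by rewrite inE Hc.
by exists (\row_i MkK (Pc i)); apply: eq_bigr => i _; rewrite mxE.
Qed.

Definition v2r (y : V) : 'rV[Kt]_dimK :=
  sval (constructive_indefinite_description _ (r2v_surj y)).
Lemma v2rK : cancel v2r r2v.
Proof. by move=> y; rewrite /v2r; case: constructive_indefinite_description. Qed.
Lemma r2vK : cancel r2v v2r.
Proof. by move=> r; apply: r2v_inj; rewrite v2rK. Qed.
Lemma v2r_lin : linear v2r.
Proof. by move=> a x y; apply: r2v_inj; rewrite r2v_lin !v2rK. Qed.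

HB.instance Definition _ := Lmodule_hasFinDim.Build Kt V
  (exist2 _ _ v2r v2r_lin (Bijective v2rK r2vK)).

Lemma const_linear_linear (f : F -> F) : const_linear f -> linear (f : V -> V).
Proof. by case=> Hadd Hhom k x y; rewrite Hadd /= /scaleK Hhom // der_kval. Qed.

Definition as_lfun (f : F -> F) (Hf : const_linear f) : 'End(V) :=
  linfun (HB.pack (f : V -> V)
    (GRing.isLinear.Build Kt V V *:%R (f : V -> V) (const_linear_linear Hf))
    : {linear V -> V}).

Lemma as_lfunE f (Hf : const_linear f) x : as_lfun Hf x = f x.
Proof. by rewrite lfunE. Qed.

(* Rank-nullity: of two K-linear maps with equal kernels, the image of the
   first, if contained in the image of the second, is all of it. *)
Lemma image_eq (L M : F -> F) : const_linear L -> const_linear M ->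
  (forall c, L c = 0 <-> M c = 0) -> (forall c, exists y, L c = M y) ->
  forall y, exists c, L c = M y.
Proof.
move=> HL HM Hker Himg y.
pose g := as_lfun HL; pose h := as_lfun HM.
have ker_eq : lker g = lker h.
  by apply/vspaceP => v; rewrite !memv_ker !as_lfunE; apply/eqP/eqP => /Hker.
have img_sub : (limg g <= limg h)%VS.
  apply/subvP => v /memv_imgP [u _ ->]; rewrite as_lfunE; have [z ->] := Himg u.
  by rewrite -(as_lfunE HM) memv_img ?memvf.
have dim_eq : \dim (limg g) = \dim (limg h).
  have := limg_ker_dim g fullv; have := limg_ker_dim h fullv.
  by rewrite ker_eq => <- /eqP; rewrite eqn_add2l => /eqP.
have img_eq : limg g = limg h by apply/eqP; rewrite eqEdim img_sub dim_eq leqnn.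
have : (M y : V) \in limg g by rewrite img_eq -(as_lfunE HM) memv_img // memvf.
by case/memv_imgP => u _ Hu; exists u; rewrite -(as_lfunE HL).
Qed.

Lemma const_linear_inj_surj (f : F -> F) : const_linear f -> injective f ->
  forall y, exists x, f x = y.
Proof.
move=> Hf Hinj y; have Hid : const_linear id by [].
have f0 : f 0 = 0 by apply: (addrI (f 0)); rewrite -(proj1 Hf) !addr0.
apply: (image_eq Hf Hid) => [c|c]; last by exists (f c).
by split=> [Hc|/= ->//]; apply: Hinj; rewrite Hc f0.
Qed.

End FiniteDimension.

Section DeltaConjugacy.
Variables (F : fieldType) (d : F -> F).
Hypothesis Hd : is_derivation d.

Local Notation seq_act := (seq_act d).
Local Notation xsub_act := (xsub_act d).

(* d-conjugacy: y = x + d u / u for some u != 0; multiplication by u is then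
   an isomorphism F_y ~ F_x.  This is an equivalence relation. *)
Definition dconj (x y : F) : Prop := exists u, u != 0 /\ y = x + d u / u.

Lemma dconj_refl x : dconj x x.
Proof. by exists 1; rewrite oner_eq0 (der1 Hd) mul0r addr0. Qed.

Lemma dconj_sym x y : dconj x y -> dconj y x.
Proof.
case=> u [u0 ->]; exists u^-1; rewrite invr_eq0 u0; split => //.
by rewrite (derV Hd u0); field_nz.
Qed.

Lemma dconj_trans x y z : dconj x y -> dconj y z -> dconj x z.
Proof.
case=> u [u0 ->] [v [v0 ->]]; exists (u * v); rewrite mulf_neq0 //; split => //.
by rewrite (derM Hd); field_nz.
Qed.

Lemma seq_act_cons a e s c : seq_act a (e :: s) c = seq_act a s (xsub_act a e c).
Proof. by []. Qed.

Lemma seq_act_rcons a s e c : seq_act a (rcons s e) c = xsub_act a e (seq_act a s c).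
Proof. by rewrite /seq_act foldl_rcons. Qed.

Lemma seq_act_const_linear a s : const_linear d (seq_act a s).
Proof.
split.
  elim: s => // e s IH x y; rewrite !seq_act_cons -IH; congr (seq_act a s _).
  by rewrite /xsub_act (xactD Hd); ring.
move=> k x dk; elim: s x => // e s IH x; rewrite !seq_act_cons -IH.
by congr (seq_act a s _); rewrite /xsub_act (xactM Hd) dk mul0r addr0; ring.
Qed.

Lemma seq_actB a s x y : seq_act a s (x - y) = seq_act a s x - seq_act a s y.
Proof.
have [Hadd Hhom] := seq_act_const_linear a s.
have dN1 : d (-1) = 0 by rewrite (derN Hd) (der1 Hd) oppr0.
by rewrite Hadd -mulN1r Hhom // mulN1r.
Qed.

Lemma seq_act0 a s : seq_act a s 0 = 0.
Proof. by have := seq_actB a s 0 0; rewrite !subrr. Qed.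

Lemma seq_act_twist a s c u : c != 0 ->
  seq_act a s (c * u) = c * seq_act (a + d c / c) s u.
Proof.
move=> c0; elim: s u => // e s IH u; rewrite !seq_act_cons -IH.
by congr (seq_act a s _); rewrite /xsub_act /xact (derM Hd); field_nz.
Qed.

Lemma xsub_act_logder a v w : v != 0 ->
  xsub_act a (a + d v / v) w = v * d (w / v).
Proof.
move=> v0; have := derM Hd v (w / v); rewrite mulrCA divff // mulr1 => Hw.
apply: (addIr (d v * (w / v))); rewrite -Hw /xsub_act /xact; field_nz.
Qed.

Lemma xsub_act_inj a e c : ~ dconj a e -> xsub_act a e c = 0 -> c = 0.
Proof.
move=> Hn; have [//|c0] := eqVneq c 0; rewrite /xsub_act /xact => /eqP.
rewrite subr_eq0 => /eqP H; case: Hn; exists c; split => //.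
by apply: (mulIf c0); rewrite -H; field_nz.
Qed.

Lemma seq_act_inj a s : (forall x, x \in s -> ~ dconj a x) -> injective (seq_act a s).
Proof.
move=> Hn x y Hxy; apply/eqP; rewrite -subr_eq0; apply/eqP.
move: (x - y) (seq_actB a s x y); rewrite Hxy subrr => {x y Hxy} c.
elim: s c Hn => // e s IH c Hn; rewrite seq_act_cons => /IH Hc.
apply: (@xsub_act_inj a e); first by apply: Hn; rewrite inE eqxx.
by apply: Hc => x Hx; apply: Hn; rewrite inE Hx orbT.
Qed.

(* Constants are killed by P_s on F_(s_1), since x - s_1 acts there as d. *)
Lemma seq_act_head s c : (0 < size s)%N -> d c = 0 -> seq_act s`_0 s c = 0.
Proof.
case: s => // a s _ dc; rewrite seq_act_cons /=.
by rewrite /xsub_act /xact dc addr0 mulrC subrr seq_act0.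
Qed.

End DeltaConjugacy.

Section GapCondition.
Variables (F : fieldType) (d : F -> F).
Hypothesis Hd : is_derivation d.

Local Notation seq_act := (seq_act d).
Local Notation dconj := (dconj d).

Definition admissible_gap (t : F) : Prop :=
  exists beta : F, beta != 0 /\ t = d beta * beta^-1 /\ ~ (exists y : F, d y = beta).

Definition gap_condition (a : seq F) : Prop :=
  forall i : nat, (i.+1 < size a)%N -> admissible_gap (a`_i.+1 - a`_i).

(* Multiplicity sequences, read through the remainder theorem. *)
Definition unique_root (a : seq F) : Prop :=
  forall b, seq_act b a 1 = 0 <-> b = a`_0.

Lemma gap_condition_rcons s e : (0 < size s)%N ->
  gap_condition (rcons s e) <->
  gap_condition s /\ admissible_gap (e - s`_(size s).-1).
Proof.
move=> sp; split.
  move=> H; split=> [i Hi|].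
    have Hi2 : (i < size s)%N := ltn_trans (ltnSn i) Hi.
    by have := H i; rewrite size_rcons !nth_rcons Hi Hi2; apply; apply: ltnW.
  have := H (size s).-1; rewrite size_rcons prednK // !nth_rcons ltnn eqxx.
  by rewrite ltn_predL sp; apply.
case=> Hg Hl i; rewrite size_rcons ltnS leq_eqVlt => /orP [/eqP Hi|Hi].
  by move: Hl; rewrite -Hi !nth_rcons Hi ltnn eqxx -Hi ltnSn.
have Hi2 : (i < size s)%N := ltn_trans (ltnSn i) Hi.
by rewrite !nth_rcons Hi Hi2; apply: Hg.
Qed.

Lemma gap_dconj_head s : gap_condition s -> forall x, x \in s -> dconj s`_0 x.
Proof.
elim/last_ind: s => // s e IH Hg x.
have [/size0nil ->|sp] := posnP (size s).
  by rewrite inE => /eqP ->; apply: (dconj_refl Hd).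
have [/IH Hs [beta [b0 [Hb _]]]] := (gap_condition_rcons e sp).1 Hg.
have Hlast : dconj s`_0 s`_(size s).-1 by apply/Hs/mem_nth; rewrite ltn_predL.
rewrite nth_rcons sp mem_rcons inE => /orP [/eqP ->|/Hs //].
by apply: (dconj_trans Hd Hlast); exists beta; split => //; rewrite -Hb addrC subrK.
Qed.

Lemma gap_invariant s : gap_condition s -> (0 < size s)%N ->
  exists u, [/\ u != 0, s`_(size s).-1 = s`_0 + d u / u,
    forall c, exists y, seq_act s`_0 s c = u * d y &
    forall c, seq_act s`_0 s c = 0 -> d c = 0].
Proof.
elim/last_ind: s => // s e IH Hg _.
have [/size0nil ->|sp] := posnP (size s).
  exists 1; split; rewrite ?oner_eq0 // ?(der1 Hd) ?mul0r ?addr0 //.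
    by move=> c; exists c; rewrite /= /xsub_act /xact mul1r; ring.
  by move=> c /eqP; rewrite /= /xsub_act /xact addrAC subrr add0r => /eqP.
have [Hg' [beta [b0 [Hb Hnd]]]] := (gap_condition_rcons e sp).1 Hg.
have [u [u0 Hl Him Hker]] := IH Hg' sp.
have -> : (rcons s e)`_0 = s`_0 by rewrite nth_rcons sp.
rewrite size_rcons /= nth_rcons ltnn eqxx.
have ub0 : u * beta != 0 by rewrite mulf_neq0.
have eE : e = s`_0 + d (u * beta) / (u * beta).
  by rewrite -(subrK s`_(size s).-1 e) Hb Hl (derM Hd); field_nz.
have TE c : seq_act s`_0 (rcons s e) c =
    (u * beta) * d (seq_act s`_0 s c / (u * beta)).
  by rewrite seq_act_rcons eE xsub_act_logder.
exists (u * beta); split => // [c|c]; first by exists (seq_act s`_0 s c / (u * beta)).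
rewrite TE => /eqP; rewrite mulf_eq0 (negbTE ub0) /= => /eqP Hk.
apply: Hker; have [y Hy] := Him c.
set k := seq_act s`_0 s c / (u * beta) in Hk.
have wE : seq_act s`_0 s c = k * (u * beta) by rewrite /k divfK.
have [k0|k0] := eqVneq k 0; first by rewrite wE k0 mul0r.
(* otherwise beta = d (y / k) would be a derivative *)
case: Hnd; exists (k^-1 * y); rewrite (derMc Hd) ?(derVc Hd) //.
apply: (mulfI u0); apply: (mulfI k0).
have H : u * d y = k * (u * beta) by rewrite -Hy wE.
by rewrite -H; field_nz.
Qed.

Lemma gap_unique_root s : gap_condition s -> (0 < size s)%N -> unique_root s.
Proof.
move=> Hg sp b; split; last by move=> ->; apply: seq_act_head; rewrite ?(der1 Hd).
move=> Hb; have [u [_ _ _ Hker]] := gap_invariant Hg sp.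
have [[c [c0 bE]]|Hn] := classic (dconj s`_0 b).
  have := seq_act_twist Hd s`_0 s 1 c0; rewrite mulr1 -bE Hb mulr0 => /Hker dc.
  by rewrite bE dc mul0r addr0.
(* otherwise P_s is injective on F_b, yet kills 1 *)
have Hinj : injective (seq_act b s).
  apply: seq_act_inj => // x Hx Hc; apply: Hn.
  exact: (dconj_trans Hd (gap_dconj_head Hg Hx) (dconj_sym Hd Hc)).
have := Hinj 1 0; rewrite Hb seq_act0 // => /(_ erefl) /eqP.
by rewrite oner_eq0.
Qed.

End GapCondition.

Section RootToGap.
Variables (F : fieldType) (d : F -> F).
Hypothesis Hd : is_derivation d.
Hypothesis Hfin : findim_over_constants d.

Local Notation seq_act := (seq_act d).
Local Notation dconj := (dconj d).

(* A root of P_s is a root of P_(s e) = (x - e) P_s. *)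
Lemma unique_root_rcons s e : (0 < size s)%N -> unique_root d (rcons s e) ->
  unique_root d s /\ forall b, seq_act b (rcons s e) 1 = 0 -> b = s`_0.
Proof.
move=> sp Hu; have h0 : (rcons s e)`_0 = s`_0 by rewrite nth_rcons sp.
have Hroot b : seq_act b (rcons s e) 1 = 0 -> b = s`_0 by rewrite -h0 => /(Hu b).1.
split=> // b; split; last by move=> ->; apply: seq_act_head; rewrite ?(der1 Hd).
by move=> Hb; apply: Hroot; rewrite seq_act_rcons Hb /xsub_act xact0 // mulr0 subr0.
Qed.

Variables (s : seq F) (e : F).
Hypothesis sp : (0 < size s)%N.
Hypothesis Hgap : gap_condition d s.
Hypothesis Hroot : forall b, seq_act b (rcons s e) 1 = 0 -> b = s`_0.

Local Notation s_last := s`_(size s).-1.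

(* If P_(s e) has no root besides s_1, its last gap is a logarithmic
   derivative: otherwise P_s would be a K-linear bijection of F_e, and the
   preimage c of 1 would make e + dc/c a root d-conjugate to e. *)
Lemma last_gap_dconj : dconj s_last e.
Proof.
have Hlast : dconj s`_0 s_last.
  by apply/(gap_dconj_head Hd Hgap)/mem_nth; rewrite ltn_predL.
apply: NNPP => Hn.
have Hinj : injective (seq_act e s).
  apply: seq_act_inj => // x Hx Hex; apply: Hn.
  exact: (dconj_trans Hd (dconj_sym Hd Hlast)
           (dconj_trans Hd (gap_dconj_head Hd Hgap Hx) (dconj_sym Hd Hex))).
have [c Hc1] := const_linear_inj_surj Hd Hfin (seq_act_const_linear Hd e s) Hinj 1.
have [c0|c0] := eqVneq c 0.
  by move: Hc1; rewrite c0 seq_act0 // => /eqP; rewrite eq_sym oner_eq0.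
have := seq_act_twist Hd e (rcons s e) 1 c0.
rewrite mulr1 seq_act_rcons Hc1 /xsub_act /xact (der1 Hd) mulr1 addr0 subrr.
move=> /esym /eqP; rewrite mulf_eq0 (negbTE c0) /= => /eqP /Hroot eE.
apply: Hn; apply: (dconj_trans Hd (dconj_sym Hd Hlast)).
by apply: (dconj_sym Hd); exists c; split => //; rewrite eE.
Qed.

(* The witness beta of the last gap is not a derivative: if beta = dy, then
   by rank-nullity (u^-1 P_s and d have kernel K and the image of the first
   lies in that of the second) some c has P_s c = u beta, and then the root
   s_1 + dc/c of P_(s e) forces dc = 0, i.e. u beta = 0. *)
Lemma last_gap_not_derivative beta : beta != 0 ->
  e - s_last = d beta * beta^-1 -> ~ (exists y, d y = beta).
Proof.
move=> b0 Hb [y dy].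
have [u [u0 Hl Him Hker]] := gap_invariant Hd Hgap sp.
pose L c := u^-1 * seq_act s`_0 s c.
have HL : const_linear d L.
  have [Hadd Hhom] := seq_act_const_linear Hd s`_0 s.
  by split=> [x z|k x dk]; rewrite /L ?Hadd ?mulrDr // Hhom // mulrCA.
have Hdlin : const_linear d d by split=> [|k x]; [apply: derD | apply: derMc].
have [c Hc] : exists c, L c = d y.
  apply: (image_eq Hd Hfin HL Hdlin) => c; last first.
    by have [z Hz] := Him c; exists z; rewrite /L Hz mulKf.
  split; last by move=> dc; rewrite /L seq_act_head // mulr0.
  by move=> /eqP; rewrite /L mulf_eq0 invr_eq0 (negbTE u0) /= => /eqP /Hker.
have Hw : seq_act s`_0 s c = u * beta by rewrite -dy -Hc /L mulVKf.
have [dc|dc0] := eqVneq (d c) 0.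
  move: Hw; rewrite seq_act_head // => /eqP; rewrite eq_sym mulf_eq0.
  by rewrite (negbTE u0) (negbTE b0).
have c0 : c != 0 by apply: contraNneq dc0 => ->; rewrite (der0 Hd).
have eE : e = s`_0 + d (u * beta) / (u * beta).
  by rewrite -(subrK s_last e) Hb Hl (derM Hd); field_nz; rewrite mulf_neq0.
have T0 : seq_act s`_0 (rcons s e) c = 0.
  rewrite seq_act_rcons Hw eE xsub_act_logder ?mulf_neq0 //.
  by rewrite divff ?mulf_neq0 // (der1 Hd) mulr0.
have := seq_act_twist Hd s`_0 (rcons s e) 1 c0; rewrite mulr1 T0 => /esym /eqP.
rewrite mulf_eq0 (negbTE c0) /= => /eqP /Hroot /eqP.
by rewrite -subr_eq0 addrAC subrr add0r mulf_eq0 invr_eq0 (negbTE c0) orbF (negbTE dc0).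
Qed.

End RootToGap.

Lemma unique_root_gap (F : fieldType) (d : F -> F) :
  is_derivation d -> findim_over_constants d ->
  forall s, (0 < size s)%N -> unique_root d s -> gap_condition d s.
Proof.
move=> Hd Hfin; elim/last_ind => // s e IH _ Hu.
have [/size0nil ->|sp] := posnP (size s); first by move=> i.
have [Hus Hroot] := unique_root_rcons Hd sp Hu.
have Hgap := IH sp Hus.
apply/(gap_condition_rcons d e sp); split => //.
have [beta [b0 eE]] := last_gap_dconj Hd Hfin sp Hgap Hroot.
have Hb : e - s`_(size s).-1 = d beta * beta^-1 by rewrite eE addrAC subrr add0r.
exists beta; split => //; split => //.
exact: (last_gap_not_derivative Hd Hfin sp Hgap Hroot b0 Hb).
Qed.

Theorem mainTheorem20 (F : fieldType) (d : F -> F) :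
  is_derivation d -> findim_over_constants d ->
  forall a : seq F, (0 < size a)%N ->
    (multiplicity_seq d a <->
     (forall i : nat, (i.+1 < size a)%N ->
        exists beta : F, beta != 0 /\
          a`_i.+1 - a`_i = d beta * beta^-1 /\
          ~ (exists y : F, d y = beta))).
Proof.
move=> Hd Hfin a sp.
have root_iff b : rdivides d (Pseq d a) b <-> seq_act d b a 1 = 0 := rdivides_Pseq Hd a b.
have multE : multiplicity_seq d a <-> unique_root d a.
  split=> H b; split.
  - by move/(root_iff b).2/(H b).1.
  - by move/(H b).2/(root_iff b).1.
  - by move/(root_iff b).1/(H b).1.
  - by move/(H b).2/(root_iff b).2.
split=> [/multE|Hgap]; first exact: unique_root_gap.
exact/multE/gap_unique_root.
Qed.
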